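(* There exist functions $f_n\colon\mathbb R^2\to\mathbb R$, $n\in\mathbb N$, such that the family $\{f_n(x,\cdot):n\in\mathbb N\}$ is equi-Baire 1 for every $x\in\mathbb R$ and the family $\{f_n(\cdot,y):n\in\mathbb N\}$ is equi-Baire 1 for every $y\in\mathbb R$, but for no nonmeager $G_\delta$ set $A\subseteq\mathbb R$ (in particular, for no comeager $G_\delta$ set $A$) is the family $\{f_n|_{A\times\mathbb R}:n\in\mathbb N\}$ equi-Baire 1 on $A\times\mathbb R$. Specifically, one can take $f_n=g$ for all $n$, where $g$ is the characteristic function of $\{(x,x):x\in B\}$ for a Bernstein set $B\subseteq\mathbb R$.
   Context: For metric spaces $(X,\rho)$, $(Y,d)$, a family $\mathcal F\subseteq Y^X$ is equi-Baire 1 if for every $\varepsilon>0$ there is $\delta_\varepsilon\colon X\to(0,\infty)$ such that for all $x,y\in X$ and all $f\in\mathcal F$, $\rho(x,y)<\min\{\delta_\varepsilon(x),\delta_\varepsilon(y)\}$ implies $d(f(x),f(y))<\varepsilon$. A Bernstein set is a set $B\subseteq\mathbb R$ such that both $B$ and $\mathbb R\setminus B$ meet every uncountable closed subset of $\mathbb R$. $\mathbb R^2$ and subsets carry the Euclidean metric. *)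

From Stdlib Require Import Reals.
Open Scope R_scope.

Definition dist_R (x y : R) : R := Rabs (x - y).
Definition dist_R2 (p q : R * R) : R :=
  sqrt ((fst p - fst q) ^ 2 + (snd p - snd q) ^ 2).

Definition equi_baire1 {X : Type} (D : X -> Prop) (rho : X -> X -> R)
  (F : nat -> X -> R) : Prop :=
  forall eps : R, 0 < eps ->
  exists delta : X -> R, (forall x, D x -> 0 < delta x) /\
    forall x y, D x -> D y -> forall n : nat,
      rho x y < Rmin (delta x) (delta y) -> Rabs (F n x - F n y) < eps.

Definition open_R (U : R -> Prop) : Prop :=
  forall x, U x -> exists e, 0 < e /\ forall y, Rabs (y - x) < e -> U y.
Definition closed_R (C : R -> Prop) : Prop := open_R (fun x => ~ C x).
Definition closure_R (A : R -> Prop) (x : R) : Prop :=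
  forall e, 0 < e -> exists y, A y /\ Rabs (y - x) < e.
Definition nowhere_dense_R (N : R -> Prop) : Prop :=
  ~ exists x e, 0 < e /\ forall y, Rabs (y - x) < e -> closure_R N y.
Definition meager_R (M : R -> Prop) : Prop :=
  exists N : nat -> R -> Prop, (forall n, nowhere_dense_R (N n)) /\
    forall x, M x -> exists n, N n x.
Definition G_delta_R (A : R -> Prop) : Prop :=
  exists U : nat -> R -> Prop, (forall n, open_R (U n)) /\
    forall x, A x <-> forall n, U n x.
Definition countable_R (A : R -> Prop) : Prop :=
  exists f : nat -> R, forall x, A x -> exists n, f n = x.

Definition bernstein (B : R -> Prop) : Prop :=
  forall C : R -> Prop, closed_R C -> ~ countable_R C ->
    (exists x, C x /\ B x) /\ (exists x, C x /\ ~ B x).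

(* Every section of g has at most one nonzero point, so it is equi-Baire 1 with
   delta(y) = |y - c| away from the exceptional point c.  On A x R, equi-Baire 1 with
   eps = 1 yields a positive delta on A such that B(w) <-> B(z) for delta-close
   w, z in A.  As A is nonmeager, the points of A with delta >= 1/(n+1) are dense in
   some interval I for some n, so by the Baire category theorem the part of A in I is an
   uncountable G_delta set on which B is constant, which a Bernstein set cannot be.
   A set B meeting and missing every uncountable G_delta set is built by transfinite
   recursion: every uncountable G_delta set contains a Cantor set, hence continuum many
   points, so there is always a fresh point left to put into B or its complement. *)

From Stdlib Require Import Reals Lra Lia Classical ClassicalEpsilon FunctionalExtensionality Cantor.
From mathcomp Require ssreflect ssrbool eqtype boolp wochoice Rstruct.
Open Scope R_scope.

Lemma small_radius a b c d : 0 < a -> 0 < b -> 0 < c -> 0 < d ->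
  exists r, 0 < r /\ r < a /\ r < b /\ r < c /\ r < d.
Proof.
  intros Ha Hb Hc Hd. exists (Rmin a (Rmin b (Rmin c d)) / 2).
  pose proof (Rmin_l a (Rmin b (Rmin c d))). pose proof (Rmin_r a (Rmin b (Rmin c d))).
  pose proof (Rmin_l b (Rmin c d)). pose proof (Rmin_r b (Rmin c d)).
  pose proof (Rmin_l c d). pose proof (Rmin_r c d).
  assert (0 < Rmin a (Rmin b (Rmin c d))) by (repeat apply Rmin_glb_lt; assumption).
  repeat split; lra.
Qed.

Lemma countable_sub (S T : R -> Prop) :
  (forall x, S x -> T x) -> countable_R T -> countable_R S.
Proof. intros H [f Hf]. exists f. intros x Sx. apply Hf, H, Sx. Qed.

(* [qr] enumerates the rationals: the triple (a, b, c) codes (a - b) / (c + 1). *)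
Definition qr (n : nat) : R :=
  let (a, bc) := Cantor.of_nat n in let (b, c) := Cantor.of_nat bc in
  (INR a - INR b) / (INR c + 1).

Lemma qr_dense x y : x < y -> exists n, x < qr n < y.
Proof.
  intros Hxy.
  destruct (archimed_cor1 (y - x)) as [N [HN HN0]]; [lra|].
  assert (HNp : 0 < INR N) by (apply lt_0_INR; lia).
  destruct (archimed (x * INR N)) as [H1 H2].
  set (k := up (x * INR N)) in *.
  exists (Cantor.to_nat (Z.to_nat k, Cantor.to_nat (Z.to_nat (- k), (N - 1)%nat))).
  unfold qr. rewrite !Cantor.cancel_of_to.
  replace (INR (Z.to_nat k) - INR (Z.to_nat (- k))) with (IZR k)
    by (rewrite !INR_IZR_INZ, <- minus_IZR; f_equal; lia).
  replace (INR (N - 1) + 1) with (INR N) by (rewrite minus_INR by lia; simpl; lra).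
  assert (1 < (y - x) * INR N).
  { apply Rmult_lt_compat_r with (r := INR N) in HN; [|lra].
    rewrite Rinv_l in HN; lra. }
  split; apply Rmult_lt_reg_r with (INR N); auto;
    unfold Rdiv; rewrite Rmult_assoc, Rinv_l by lra; lra.
Qed.

Lemma nested_intervals (a b : nat -> R) :
  (forall k, a k < a (S k) /\ a (S k) < b (S k) /\ b (S k) < b k) ->
  exists y, forall k, a k < y < b k.
Proof.
  intros H.
  assert (Hmono : forall k d, a k <= a (k + d)%nat /\ b (k + d)%nat <= b k).
  { intros k d. induction d as [|d IH].
    - rewrite Nat.add_0_r. lra.
    - rewrite Nat.add_succ_r. destruct (H (k + d)%nat). lra. }
  assert (Hab : forall k m, a k <= b m).
  { intros k m. destruct (H k), (H m).
    destruct (Nat.le_ge_cases k m) as [Hk|Hk].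
    - destruct (Hmono k (m - k)%nat) as [Ha _].
      replace (k + (m - k))%nat with m in Ha by lia. lra.
    - destruct (Hmono m (k - m)%nat) as [_ Hb].
      replace (m + (k - m))%nat with k in Hb by lia. lra. }
  destruct (completeness (fun z => exists k, z = a k)) as [y [Hub Hlub]].
  - exists (b 0%nat). intros z [k ->]. apply Hab.
  - exists (a 0%nat), 0%nat. reflexivity.
  - exists y. intros k. destruct (H k). split.
    + assert (a (S k) <= y) by (apply Hub; eauto). lra.
    + assert (y <= b (S k)) by (apply Hlub; intros z [m ->]; apply Hab). lra.
Qed.

(** * The Baire category theorem on an interval *)

Definition dense_in (U : R -> Prop) (a b : R) : Prop :=
  forall y, a < y < b -> closure_R U y.

Lemma subinterval_avoiding a b c : a < b ->
  exists a' b', a <= a' /\ a' < b' /\ b' <= b /\ (c < a' \/ b' < c).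
Proof.
  intros Hab. destruct (Rlt_le_dec c ((a + b) / 2)) as [Hc|Hc].
  - exists ((a + b) / 2), b. lra.
  - exists a, ((3 * a + b) / 4). lra.
Qed.

Lemma open_dense_subinterval (U : R -> Prop) a b a' b' :
  open_R U -> dense_in U a b -> a <= a' -> a' < b' -> b' <= b ->
  exists a'' b'', a' < a'' /\ a'' < b'' /\ b'' < b' /\ forall z, a'' <= z <= b'' -> U z.
Proof.
  intros HU Hd H1 H2 H3.
  destruct (Hd ((a' + b') / 2) ltac:(lra) ((b' - a') / 2) ltac:(lra)) as [z [Uz Hz]].
  apply Rabs_def2 in Hz.
  destruct (HU z Uz) as [e [He Hball]].
  destruct (small_radius e (z - a') (b' - z) e) as [s [Hs [Hs1 [Hs2 [Hs3 _]]]]]; try lra.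
  exists (z - s), (z + s). repeat split; try lra.
  intros w Hw. apply Hball, Rabs_def1; lra.
Qed.

Lemma baire_interval (a b : R) (U : nat -> R -> Prop) (f : nat -> R) : a < b ->
  (forall k, open_R (U k)) -> (forall k, dense_in (U k) a b) ->
  exists y, a < y < b /\ (forall k, U k y) /\ (forall k, y <> f k).
Proof.
  intros Hab HU Hd.
  set (shrinks := fun k (p q : R * R) => fst p < fst q /\ fst q < snd q /\ snd q < snd p /\
     (forall z, fst q <= z <= snd q -> U k z) /\ (f k < fst q \/ snd q < f k)).
  assert (Hstep : forall k p, a <= fst p -> fst p < snd p -> snd p <= b ->
                    exists q, shrinks k p q).
  { intros k [a' b'] H1 H2 H3; simpl in *.
    destruct (subinterval_avoiding a' b' (f k) H2) as [a1 [b1 Hav]].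
    destruct (open_dense_subinterval (U k) a b a1 b1) as [a2 [b2 Hsub]];
      try apply HU; try apply Hd; try lra.
    exists (a2, b2). unfold shrinks; simpl. intuition lra. }
  set (box := fix box (k : nat) : R * R := match k with
         | O => (a, b) | S k => epsilon (inhabits (0, 0)) (shrinks k (box k)) end).
  assert (Hbox : forall k, a <= fst (box k) /\ fst (box k) < snd (box k) /\
                           snd (box k) <= b /\ shrinks k (box k) (box (S k))).
  { assert (Hnext : forall k, a <= fst (box k) -> fst (box k) < snd (box k) ->
              snd (box k) <= b -> shrinks k (box k) (box (S k))).
    { intros k H1 H2 H3. apply (epsilon_spec (inhabits (0, 0)) (shrinks k (box k))).
      apply Hstep; assumption. }
    induction k as [|k IH].
    - split; [|split; [|split]]; try (simpl; lra). apply Hnext; simpl; lra.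
    - destruct IH as [H1 [H2 [H3 [G1 [G2 [G3 _]]]]]].
      split; [|split; [|split]]; try lra. apply Hnext; lra. }
  destruct (nested_intervals (fun k => fst (box k)) (fun k => snd (box k))) as [y Hy].
  { intros k. destruct (Hbox k) as [_ [_ [_ [G1 [G2 [G3 _]]]]]]. auto. }
  exists y. split; [|split]; [destruct (Hy 0%nat); simpl in *; lra|..];
    intros k; destruct (Hbox k) as [_ [_ [_ [_ [_ [_ [HUk Hfk]]]]]]]; destruct (Hy (S k)).
  - apply HUk. lra.
  - lra.
Qed.

Lemma interval_uncountable a b : a < b -> ~ countable_R (fun x => a < x < b).
Proof.
  intros Hab [f Hf].
  destruct (baire_interval a b (fun _ _ => True) f Hab) as [y [Hy [_ Hn]]].
  - intros k x _. exists 1. split; [lra | auto].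
  - intros k y _ e He. exists y. split; auto. rewrite Rminus_diag, Rabs_R0. lra.
  - destruct (Hf y Hy) as [n Hn']. exact (Hn n (eq_sym Hn')).
Qed.

(** * Uncountable G_delta sets contain continuum many points *)

Definition condensation_point (S : R -> Prop) (p : R) : Prop := S p /\
  forall r, 0 < r -> ~ countable_R (fun x => S x /\ p - r < x < p + r).

(* Otherwise [S] is covered by one point and countably many rational intervals with
   countable intersection with [S]. *)
Lemma two_condensation_points (S : R -> Prop) : ~ countable_R S ->
  exists p q, p < q /\ condensation_point S p /\ condensation_point S q.
Proof.
  intros HS. apply NNPP. intros H. apply HS.
  assert (Huniq : forall x y, condensation_point S x -> condensation_point S y -> x = y).
  { intros x y Hx Hy. destruct (Rtotal_order x y) as [E|[E|E]]; auto;
      exfalso; apply H; eauto. }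
  set (p0 := epsilon (inhabits 0) (condensation_point S)).
  set (en := fun i j => epsilon (inhabits (fun _ : nat => 0))
     (fun h => forall y, S y /\ qr i < y < qr j -> exists m, h m = y)).
  exists (fun n => match Cantor.of_nat n with
     | (O, _) => p0
     | (S _, r) => let (i, jm) := Cantor.of_nat r in let (j, m) := Cantor.of_nat jm in en i j m end).
  intros x Sx.
  destruct (classic (condensation_point S x)) as [Hc|Hc].
  - exists (Cantor.to_nat (0, 0)%nat). rewrite Cantor.cancel_of_to.
    apply Huniq; auto. apply epsilon_spec. eauto.
  - assert (Hr : exists r, 0 < r /\ countable_R (fun y => S y /\ x - r < y < x + r)).
    { apply NNPP. intros Hn. apply Hc. split; auto. intros r Hr Hcr. apply Hn. eauto. }
    destruct Hr as [r [Hr Hcr]].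
    destruct (qr_dense (x - r) x) as [i Hi]; [lra|].
    destruct (qr_dense x (x + r)) as [j Hj]; [lra|].
    assert (Hen : forall y, S y /\ qr i < y < qr j -> exists m, en i j m = y).
    { apply (epsilon_spec (inhabits (fun _ : nat => 0))
        (fun h => forall y, S y /\ qr i < y < qr j -> exists m, h m = y)).
      destruct Hcr as [h Hh]. exists h. intros y [Sy Hy]. apply Hh. split; auto; lra. }
    destruct (Hen x) as [m Hm]; [split; auto; lra|].
    exists (Cantor.to_nat (1, Cantor.to_nat (i, Cantor.to_nat (j, m))))%nat.
    rewrite !Cantor.cancel_of_to. exact Hm.
Qed.

Section CantorScheme.
Variables (G : R -> Prop) (U : nat -> R -> Prop).
Hypothesis U_open : forall n, open_R (U n).
Hypothesis G_inter : forall x, G x <-> forall n, U n x.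

Definition fat (p : R * R) : Prop := ~ countable_R (fun x => G x /\ fst p < x < snd p).

Definition refines (k : nat) (p q : R * R) : Prop :=
  fst p < fst q /\ fst q < snd q /\ snd q < snd p /\
  (forall z, fst q <= z <= snd q -> U k z) /\ fat q.

Lemma refines_near_condensation (k : nat) (p : R * R) (c D : R) :
  condensation_point (fun x => G x /\ fst p < x < snd p) c -> 0 < D ->
  exists q, refines k p q /\ c - D < fst q /\ snd q < c + D.
Proof.
  intros [[Gc Hc] Hcond] HD.
  destruct (U_open k c (proj1 (G_inter c) Gc k)) as [e [He Hball]].
  destruct (small_radius e (c - fst p) (snd p - c) D) as [r [Hr [R1 [R2 [R3 R4]]]]]; try lra.
  exists (c - r, c + r). unfold refines; simpl. repeat split; try lra.
  - intros z Hz. apply Hball, Rabs_def1; lra.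
  - intros Hcnt. apply (Hcond r Hr). revert Hcnt. apply countable_sub.
    intros x [[Gx Hx] Hxc]. simpl. repeat split; auto; lra.
Qed.

Lemma refines_twice (k : nat) (p : R * R) : fat p ->
  exists qq : (R * R) * (R * R), refines k p (fst qq) /\ refines k p (snd qq) /\
    snd (fst qq) < fst (snd qq).
Proof.
  intros Hp.
  destruct (two_condensation_points _ Hp) as [c [c' [Hcc' [Hc Hc']]]].
  destruct (refines_near_condensation k p c ((c' - c) / 3) Hc) as [q [Hq Hq']]; [lra|].
  destruct (refines_near_condensation k p c' ((c' - c) / 3) Hc') as [q' [Hr Hr']]; [lra|].
  exists (q, q'). simpl. split; [|split]; auto; lra.
Qed.

Definition children (k : nat) (p : R * R) : (R * R) * (R * R) :=
  epsilon (inhabits ((0, 0), (0, 0))) (fun qq =>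
    refines k p (fst qq) /\ refines k p (snd qq) /\ snd (fst qq) < fst (snd qq)).

Definition child (bit : bool) (k : nat) (p : R * R) : R * R :=
  if bit then fst (children k p) else snd (children k p).

Lemma children_spec k p : fat p ->
  refines k p (child true k p) /\ refines k p (child false k p) /\
  snd (child true k p) < fst (child false k p).
Proof.
  intros Hp. exact (epsilon_spec (inhabits ((0, 0), (0, 0))) _ (refines_twice k p Hp)).
Qed.

Fixpoint branch (p0 : R * R) (al : nat -> bool) (k : nat) : R * R :=
  match k with O => p0 | S k => child (al k) k (branch p0 al k) end.

Lemma branch_refines p0 al : fat p0 ->
  forall k, fat (branch p0 al k) /\ refines k (branch p0 al k) (branch p0 al (S k)).
Proof.
  intros H0. induction k as [|k [IHfat IHref]].
  - split; auto. simpl. destruct (al 0%nat); apply children_spec; auto.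
  - pose proof IHref as [_ [_ [_ [_ Hfat]]]]. split; auto.
    change (branch p0 al (S (S k))) with (child (al (S k)) (S k) (branch p0 al (S k))).
    destruct (al (S k)); apply children_spec; auto.
Qed.

Lemma branch_prefix p0 al be k : (forall i, (i < k)%nat -> al i = be i) ->
  branch p0 al k = branch p0 be k.
Proof.
  induction k as [|k IH]; intros Hi; simpl; auto.
  rewrite IH by (intros i Hik; apply Hi; lia). rewrite (Hi k) by lia. reflexivity.
Qed.

Section Limit.
Variable p0 : R * R.
Hypothesis p0_fat : fat p0.

Definition limit (al : nat -> bool) : R :=
  epsilon (inhabits 0) (fun y => forall k, fst (branch p0 al k) < y < snd (branch p0 al k)).

Lemma limit_in_branch al k : fst (branch p0 al k) < limit al < snd (branch p0 al k).
Proof.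
  revert k. apply (epsilon_spec (inhabits 0)
    (fun y => forall k, fst (branch p0 al k) < y < snd (branch p0 al k))).
  apply nested_intervals. intros k.
  destruct (branch_refines p0 al p0_fat k) as [_ [H1 [H2 [H3 _]]]]. auto.
Qed.

Lemma limit_in_G al : G (limit al).
Proof.
  apply G_inter. intros k.
  destruct (branch_refines p0 al p0_fat k) as [_ [_ [_ [_ [HU _]]]]].
  apply HU. pose proof (limit_in_branch al (S k)). lra.
Qed.

(* Two branches that first differ at index k are separated by the gap between the
   two children of their common node of depth k. *)
Lemma limit_split al be : forall k,
  (forall i, (i < k)%nat -> al i = be i) \/ limit al <> limit be.
Proof.
  induction k as [|k [IH|IH]]; [left; intros; lia | | right; auto].
  destruct (Bool.bool_dec (al k) (be k)) as [E|E].
  - left. intros i Hi. destruct (Nat.eq_dec i k) as [->|Hik]; auto. apply IH. lia.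
  - right. pose proof (limit_in_branch al (S k)) as Ha.
    pose proof (limit_in_branch be (S k)) as Hb. simpl in Ha, Hb.
    rewrite (branch_prefix p0 al be k IH) in Ha.
    destruct (branch_refines p0 be p0_fat k) as [Hfat _].
    destruct (children_spec k _ Hfat) as [_ [_ Hgap]].
    unfold child in Hgap. intros Heq.
    destruct (al k), (be k); simpl in Ha, Hb; try congruence; lra.
Qed.

Lemma limit_injective al be : limit al = limit be -> al = be.
Proof.
  intros Heq. apply functional_extensionality. intros k.
  destruct (limit_split al be (S k)) as [H|H]; [apply H; lia | contradiction].
Qed.

End Limit.
End CantorScheme.

Lemma cantor_embedding (G : R -> Prop) : G_delta_R G -> ~ countable_R G ->
  exists phi : (nat -> bool) -> R, (forall al be, phi al = phi be -> al = be) /\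
    forall al, G (phi al).
Proof.
  intros [U [HU HG]] Hc.
  destruct (two_condensation_points G Hc) as [p [_ [_ [[_ Hp] _]]]].
  assert (Hfat : fat G (p - 1, p + 1)) by (apply Hp; lra).
  exists (limit G U (p - 1, p + 1)). split.
  - apply limit_injective; auto.
  - apply limit_in_G; auto.
Qed.

(* A real is determined by the set of rationals below it. *)
Lemma cut_injection : exists psi : R -> (nat -> bool), forall x y, psi x = psi y -> x = y.
Proof.
  exists (fun x n => if Rlt_dec (qr n) x then true else false).
  intros x y H. destruct (Rtotal_order x y) as [E|[E|E]]; auto; exfalso;
    [destruct (qr_dense x y E) as [n Hn] | destruct (qr_dense y x E) as [n Hn]];
    assert (H' := f_equal (fun f => f n) H); simpl in H';
    destruct (Rlt_dec (qr n) x), (Rlt_dec (qr n) y); try discriminate; lra.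
Qed.

Definition embeds_R (X : R -> Prop) : Prop := exists h : R -> R,
  (forall r r', h r = h r' -> r = r') /\ forall r, X (h r).

Lemma embeds_R_uncountable_G_delta (G : R -> Prop) :
  G_delta_R G -> ~ countable_R G -> embeds_R G.
Proof.
  intros Hg Hc. destruct (cantor_embedding G Hg Hc) as [phi [Hi HG]].
  destruct cut_injection as [psi Hpsi].
  exists (fun r => phi (psi r)). split; auto.
Qed.

(** * Coding G_delta sets by binary sequences *)

(* Bit <k, <i, j>> of [be] says whether the rational interval (qr i, qr j) is used
   in the k-th open set. *)
Definition G_delta_code (be : nat -> bool) (x : R) : Prop :=
  forall k, exists i j, be (Cantor.to_nat (k, Cantor.to_nat (i, j))) = true /\ qr i < x < qr j.

Lemma G_delta_code_G_delta be : G_delta_R (G_delta_code be).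
Proof.
  exists (fun k x => exists i j, be (Cantor.to_nat (k, Cantor.to_nat (i, j))) = true /\
                                qr i < x < qr j).
  split; [|intros x; reflexivity].
  intros k x [i [j [Hb Hx]]]. exists (Rmin (x - qr i) (qr j - x)). split.
  - apply Rmin_glb_lt; lra.
  - intros y Hy. exists i, j. split; auto. apply Rabs_def2 in Hy.
    generalize (Rmin_l (x - qr i) (qr j - x)) (Rmin_r (x - qr i) (qr j - x)). lra.
Qed.

Lemma G_delta_coded G : G_delta_R G -> exists be, forall x, G x <-> G_delta_code be x.
Proof.
  intros [U [HU HG]].
  exists (fun n => let (k, ij) := Cantor.of_nat n in let (i, j) := Cantor.of_nat ij in
     if excluded_middle_informative (forall z, qr i < z < qr j -> U k z) then true else false).
  intros x. rewrite HG. unfold G_delta_code. split.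
  - intros H k. destruct (HU k x (H k)) as [e [He Hball]].
    destruct (qr_dense (x - e) x) as [i Hi]; [lra|].
    destruct (qr_dense x (x + e)) as [j Hj]; [lra|].
    exists i, j. rewrite !Cantor.cancel_of_to. split; [|lra].
    destruct excluded_middle_informative as [_|Hn]; auto. exfalso. apply Hn.
    intros z Hz. apply Hball, Rabs_def1; lra.
  - intros H k. destruct (H k) as [i [j [Hb Hx]]]. rewrite !Cantor.cancel_of_to in Hb.
    destruct excluded_middle_informative as [Hk|_]; [apply Hk; auto | discriminate].
Qed.

Lemma closed_G_delta C : closed_R C -> G_delta_R C.
Proof.
  intros HC.
  exists (fun n x => exists c, C c /\ Rabs (x - c) < / (INR n + 1)). split.
  - intros n x [c [Cc Hc]]. exists (/ (INR n + 1) - Rabs (x - c)). split; [lra|].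
    intros y Hy. exists c. split; auto.
    pose proof (Rabs_triang (y - x) (x - c)) as Htri.
    replace (y - x + (x - c)) with (y - c) in Htri by ring. lra.
  - intros x. split.
    + intros Cx n. exists x. split; auto. rewrite Rminus_diag, Rabs_R0.
      apply Rinv_0_lt_compat. generalize (pos_INR n). lra.
    + intros H. apply NNPP. intros Cx. destruct (HC x Cx) as [e [He Hball]].
      destruct (archimed_cor1 e He) as [N [HN HN0]].
      destruct (H N) as [c [Cc Hc]]. apply (Hball c); auto. rewrite Rabs_minus_sym.
      assert (/ (INR N + 1) < / INR N).
      { apply Rinv_lt_contravar; [|lra].
        apply Rmult_lt_0_compat; [apply lt_0_INR; lia | generalize (pos_INR N); lra]. }
      lra.
Qed.

(** * A set meeting and missing every uncountable G_delta set *)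

Module WellOrder.
Import ssreflect ssrbool eqtype boolp wochoice Rstruct.

Lemma R_well_order : exists W : R -> R -> Prop,
  (forall P : R -> Prop, (exists x, P x) -> exists z, P z /\ forall x, P x -> W z x) /\
  (forall x y, W x y -> W y x -> x = y).
Proof.
have [W HW] := well_ordering_principle R.
exists (fun x y => W x y); split.
- move=> P [x Px].
  have ne : nonempty (fun y => `[< P y >]) by exists x; rewrite unfold_in; apply/asboolP.
  have [z [[Hz Hl] _]] := HW _ ne.
  exists z; split; first by move: Hz; rewrite unfold_in => /asboolP.
  by move=> y Py; apply: Hl; rewrite unfold_in; apply/asboolP.
- move=> x y Hxy Hyx.
  have ne : nonempty (pred2 x y) by exists x; rewrite unfold_in /= eqxx.
  have [z [_ U]] := HW _ ne.
  have refl w : W w w.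
    have ne1 : nonempty (pred1 w) by exists w; rewrite unfold_in /=.
    have [m [[Hm Hl] _]] := HW _ ne1.
    by move: Hm; rewrite unfold_in /= => /eqP Em; rewrite -{1}Em; apply: Hl; rewrite unfold_in /=.
  have least w : (w == x) || (w == y) -> minimum_of W (pred2 x y) w.
    move=> Hw; split; first by rewrite unfold_in.
    move=> v; rewrite unfold_in /= => /orP [/eqP ->|/eqP ->];
      case/orP: Hw => /eqP -> //; exact: refl.
  have Lx := least x (introT orP (or_introl (eqxx x))).
  have Ly := least y (introT orP (or_intror (eqxx y))).
  by rewrite -(U _ Lx) (U _ Ly).
Qed.
End WellOrder.

(* Transfinite recursion along a well-order [W] of R, cut at the first element with
   continuum many predecessors.  Each index [t] codes a G_delta set and a bit; [pick t]
   is a point of the coded set not picked before, which exists because the coded set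
   has continuum many points while [t] has fewer predecessors. *)
Section Bernstein.
Variable W : R -> R -> Prop.
Hypothesis W_least : forall P : R -> Prop, (exists x, P x) ->
  exists z, P z /\ forall x, P x -> W z x.
Hypothesis W_antisym : forall x y, W x y -> W y x -> x = y.

Definition ltW s t := W s t /\ s <> t.

Lemma W_total s t : W s t \/ W t s.
Proof.
  destruct (W_least (fun z => z = s \/ z = t)) as [z [[-> | ->] Hz]]; eauto.
Qed.

Lemma ltW_wf : well_founded ltW.
Proof.
  intros a. apply NNPP. intros Ha.
  destruct (W_least (fun x => ~ Acc ltW x)) as [z [Hz Hmin]]; [eauto|].
  apply Hz. constructor. intros y [Wyz Hne]. apply NNPP. intros Hy.
  apply Hne, W_antisym; auto.
Qed.

Definition short (t : R) : Prop := ~ embeds_R (fun s => ltW s t).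

Lemma embeds_R_short : embeds_R short.
Proof.
  destruct (classic (exists t, ~ short t)) as [Hex|Hall].
  - destruct (W_least _ Hex) as [t0 [Ht0 Hmin]].
    apply NNPP in Ht0. destruct Ht0 as [h [Hinj Hlt]].
    exists h. split; auto. intros r Hr.
    destruct (Hlt r) as [W1 Hne]. apply Hne, W_antisym; auto.
  - exists (fun r => r). split; auto. intros r. apply NNPP. intros Hr. eauto.
Qed.

Lemma short_codes : exists code : R -> (nat -> bool),
  forall be, exists t, short t /\ code t = be.
Proof.
  destruct (cantor_embedding (fun _ => True)) as [phi [Hphi _]].
  - exists (fun _ _ => True). split; [|tauto]. intros n x _. exists 1. split; [lra | auto].
  - intros Hc. apply (interval_uncountable 0 1); [lra|]. revert Hc. apply countable_sub. auto.
  - destruct embeds_R_short as [h [Hh Hshort]].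
    exists (fun t => epsilon (inhabits (fun _ : nat => false)) (fun be => h (phi be) = t)).
    intros be. exists (h (phi be)). split; auto.
    apply Hphi, Hh. apply (epsilon_spec (inhabits (fun _ : nat => false))
      (fun be' => h (phi be') = h (phi be))). eauto.
Qed.

Section Construction.
Variable code : R -> (nat -> bool).
Hypothesis code_onto : forall be, exists t, short t /\ code t = be.

Definition target (t : R) : R -> Prop := G_delta_code (fun n => code t (S n)).

Definition pick_step (t : R) (rec : forall s, ltW s t -> R) : R :=
  epsilon (inhabits 0) (fun p => target t p /\ forall s (H : ltW s t), rec s H <> p).

Definition pick : R -> R := Fix ltW_wf (fun _ => R) pick_step.

Lemma pick_eq t :
  pick t = epsilon (inhabits 0) (fun p => target t p /\ forall s, ltW s t -> pick s <> p).
Proof.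
  unfold pick at 1. rewrite Fix_eq; [reflexivity|].
  intros x f g Hfg. unfold pick_step.
  replace g with f; [reflexivity|].
  apply functional_extensionality_dep. intros s.
  apply functional_extensionality_dep. auto.
Qed.

Definition active (t : R) : Prop := short t /\ ~ countable_R (target t).

Lemma pick_spec t : active t -> target t (pick t) /\ forall s, ltW s t -> pick s <> pick t.
Proof.
  intros [Hshort Hunc]. rewrite pick_eq. apply epsilon_spec.
  apply NNPP. intros Hnone. apply Hshort.
  destruct (embeds_R_uncountable_G_delta (target t) (G_delta_code_G_delta _) Hunc)
    as [g [Hg Htarget]].
  assert (Hold : forall r, exists s, ltW s t /\ pick s = g r).
  { intros r. apply NNPP. intros Hr. apply Hnone. exists (g r). split; auto.
    intros s Hs E. apply Hr. eauto. }
  exists (fun r => epsilon (inhabits 0) (fun s => ltW s t /\ pick s = g r)). split.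
  - intros r r' E. apply Hg.
    destruct (epsilon_spec (inhabits 0) _ (Hold r)) as [_ E1].
    destruct (epsilon_spec (inhabits 0) _ (Hold r')) as [_ E2].
    rewrite <- E1, <- E2, E. reflexivity.
  - intros r. exact (proj1 (epsilon_spec (inhabits 0) _ (Hold r))).
Qed.

Lemma pick_injective t t' : active t -> active t' -> t <> t' -> pick t <> pick t'.
Proof.
  intros Ht Ht' Hne. destruct (W_total t t') as [H|H].
  - apply (proj2 (pick_spec t' Ht')). split; auto.
  - intros E. symmetry in E. revert E. apply (proj2 (pick_spec t Ht)). split; auto.
Qed.

Definition bernstein_set (p : R) : Prop := exists t, active t /\ code t O = true /\ pick t = p.

Lemma bernstein_set_meets_and_misses G : G_delta_R G -> ~ countable_R G ->
  (exists p, G p /\ bernstein_set p) /\ (exists p, G p /\ ~ bernstein_set p).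
Proof.
  intros Hg Hc. destruct (G_delta_coded G Hg) as [be Hbe].
  assert (Hbit : forall bit, exists t, active t /\ code t O = bit /\ forall x, G x <-> target t x).
  { intros bit.
    destruct (code_onto (fun n => match n with O => bit | S m => be m end)) as [t [Ht Hct]].
    exists t. unfold active, target. rewrite Hct.
    split; [split; auto | split; [reflexivity | exact Hbe]].
    intros Hcnt. apply Hc. revert Hcnt. apply countable_sub. intros x Gx. apply Hbe, Gx. }
  split.
  - destruct (Hbit true) as [t [Ht [Hb HG]]]. exists (pick t). split.
    + apply HG, pick_spec; auto.
    + exists t. auto.
  - destruct (Hbit false) as [t [Ht [Hb HG]]]. exists (pick t). split.
    + apply HG, pick_spec; auto.
    + intros [t' [Ht' [Hb' E]]]. apply (pick_injective t' t); auto.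
      intros ->. congruence.
Qed.

End Construction.
End Bernstein.

Lemma meets_and_misses_uncountable_G_delta : exists B : R -> Prop,
  forall G, G_delta_R G -> ~ countable_R G ->
    (exists p, G p /\ B p) /\ (exists p, G p /\ ~ B p).
Proof.
  destruct WellOrder.R_well_order as [W [Hleast Hanti]].
  destruct (short_codes W Hleast Hanti) as [code Hcode].
  exists (bernstein_set W Hleast Hanti code). apply bernstein_set_meets_and_misses; auto.
Qed.

(** * Nonmeager G_delta sets *)

Lemma G_delta_inter_interval A a b : G_delta_R A -> G_delta_R (fun x => A x /\ a < x < b).
Proof.
  intros [U [HU HA]].
  exists (fun k x => U k x /\ a < x < b). split.
  - intros k x [Ux Hx]. destruct (HU k x Ux) as [e [He Hball]].
    destruct (small_radius e (x - a) (b - x) e) as [r [Hr [R1 [R2 [R3 _]]]]]; try lra.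
    exists r. split; auto. intros y Hy. apply Rabs_def2 in Hy.
    split; [apply Hball, Rabs_def1|]; lra.
  - intros x. rewrite HA. split; [intros [H Hx] k; auto | intros H; split; [apply H | apply (H 0%nat)]].
Qed.

Lemma G_delta_dense_uncountable A a b : G_delta_R A -> a < b -> dense_in A a b ->
  ~ countable_R (fun x => A x /\ a < x < b).
Proof.
  intros [U [HU HA]] Hab Hd [f Hf].
  destruct (baire_interval a b U f Hab HU) as [y [Hy [HUy Hne]]].
  - intros k y Hy e He. destruct (Hd y Hy e He) as [z [Az Hz]].
    exists z. split; auto. apply HA, Az.
  - destruct (Hf y) as [m Hm]; [split; auto; apply HA, HUy|]. exact (Hne m (eq_sym Hm)).
Qed.

Lemma nonmeager_level_dense (A : R -> Prop) (d : R -> R) :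
  ~ meager_R A -> (forall x, A x -> 0 < d x) ->
  exists n x0 e, 0 < e /\ dense_in (fun x => A x /\ / (INR n + 1) < d x) (x0 - e) (x0 + e).
Proof.
  intros HnM Hd. apply NNPP. intros Hnone. apply HnM.
  exists (fun n x => A x /\ / (INR n + 1) < d x). split.
  - intros n [x0 [e [He Hcl]]]. apply Hnone. exists n, x0, e. split; auto.
    intros y Hy. apply Hcl, Rabs_def1; lra.
  - intros x Ax. destruct (archimed_cor1 _ (Hd x Ax)) as [N [HN HN0]].
    exists N. split; auto.
    assert (/ (INR N + 1) < / INR N).
    { apply Rinv_lt_contravar; [|lra].
      apply Rmult_lt_0_compat; [apply lt_0_INR; lia | generalize (pos_INR N); lra]. }
    lra.
Qed.

(* On a nonmeager G_delta set, a property that is constant on [d]-small pairs is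
   constant on an uncountable G_delta subset: take an interval in which the points
   with [d > 1/(n+1)] are dense, shrunk to a quarter of that radius. *)
Lemma locally_constant_on_uncountable_G_delta (A P : R -> Prop) (d : R -> R) :
  G_delta_R A -> ~ meager_R A -> (forall x, A x -> 0 < d x) ->
  (forall w z, A w -> A z -> Rabs (w - z) < Rmin (d w) (d z) -> (P w <-> P z)) ->
  exists G, G_delta_R G /\ ~ countable_R G /\ forall p q, G p -> G q -> (P p <-> P q).
Proof.
  intros HA HnM Hd Hloc.
  destruct (nonmeager_level_dense A d HnM Hd) as [n [x0 [e [He Hdense]]]].
  set (rho := / (INR n + 1)) in Hdense.
  assert (Hrho : 0 < rho) by (apply Rinv_0_lt_compat; generalize (pos_INR n); lra).
  destruct (small_radius e (rho / 4) e e) as [r [Hr [Hre [Hrr _]]]]; try lra.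
  assert (Hsub : forall y, x0 - r < y < x0 + r -> closure_R (fun x => A x /\ rho < d x) y)
    by (intros y Hy; apply Hdense; lra).
  assert (Happrox : forall p, A p -> x0 - r < p < x0 + r ->
            exists w, A w /\ rho < d w /\ w - p < rho / 4 /\ p - w < rho / 4 /\ (P w <-> P p)).
  { intros p Ap Hp.
    destruct (Hsub p Hp (Rmin (d p) (rho / 4))) as [w [[Aw Hw] Hwp]];
      [apply Rmin_glb_lt; auto; lra|].
    pose proof (Rmin_l (d p) (rho / 4)). pose proof (Rmin_r (d p) (rho / 4)).
    exists w. apply Rabs_def2 in Hwp as [Hwp1 Hwp2].
    split; [|split; [|split; [|split]]]; auto; try lra.
    apply Hloc; auto. apply Rmin_glb_lt; apply Rabs_def1; lra. }
  exists (fun x => A x /\ x0 - r < x < x0 + r). split; [|split].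
  - apply G_delta_inter_interval, HA.
  - apply G_delta_dense_uncountable; auto; [lra|].
    intros y Hy eps Heps. destruct (Hsub y Hy eps Heps) as [z [[Az _] Hz]]. eauto.
  - intros p q [Ap Hp] [Aq Hq].
    destruct (Happrox p Ap Hp) as [w [Aw [Hdw [Hw1 [Hw2 Ew]]]]].
    destruct (Happrox q Aq Hq) as [w' [Aw' [Hdw' [Hw1' [Hw2' Ew']]]]].
    rewrite <- Ew, <- Ew'. apply Hloc; auto.
    apply Rmin_glb_lt; apply Rabs_def1; lra.
Qed.

(** * Equi-Baire 1 families *)

Lemma equi_baire1_single_support (c : R) (h : R -> R) : (forall y, y <> c -> h y = 0) ->
  equi_baire1 (fun _ => True) dist_R (fun (_ : nat) y => h y).
Proof.
  intros Hh eps Heps.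
  exists (fun y => if Req_EM_T y c then 1 else Rabs (y - c)). split.
  - intros y _. destruct (Req_EM_T y c); [lra|]. apply Rabs_pos_lt. lra.
  - intros y z _ _ _ Hd. unfold dist_R in Hd.
    enough (E : h y = h z) by (rewrite E, Rminus_diag, Rabs_R0; lra).
    destruct (Req_EM_T y c) as [->|Ey], (Req_EM_T z c) as [->|Ez]; auto.
    + exfalso. generalize (Rmin_r 1 (Rabs (z - c))). rewrite Rabs_minus_sym in Hd. lra.
    + exfalso. generalize (Rmin_l (Rabs (y - c)) 1). lra.
    + rewrite !Hh; auto.
Qed.

Lemma dist_R2_diag w z : dist_R2 (w, w) (z, z) <= 2 * Rabs (w - z).
Proof.
  unfold dist_R2; simpl fst; simpl snd.
  rewrite <- (sqrt_pow2 (2 * Rabs (w - z))) by (generalize (Rabs_pos (w - z)); lra).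
  apply sqrt_le_1_alt. rewrite Rpow_mult_distr, pow2_abs. simpl.
  pose proof (Rle_0_sqr (w - z)). unfold Rsqr in *. lra.
Qed.

Definition diag_indicator (B : R -> Prop) (p : R * R) : R :=
  if excluded_middle_informative (B (fst p) /\ fst p = snd p) then 1 else 0.

Lemma diag_indicator_off_diag B x y : x <> y -> diag_indicator B (x, y) = 0.
Proof.
  intros Hxy. unfold diag_indicator; simpl.
  destruct excluded_middle_informative as [[_ E]|]; [contradiction | reflexivity].
Qed.

Lemma diag_indicator_close B w z :
  Rabs (diag_indicator B (w, w) - diag_indicator B (z, z)) < 1 -> (B w <-> B z).
Proof.
  unfold diag_indicator; simpl.
  destruct excluded_middle_informative as [[Bw _]|Bw];
  destruct excluded_middle_informative as [[Bz _]|Bz]; try tauto;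
    [rewrite Rminus_0_r, Rabs_R1 | rewrite Rminus_0_l, Rabs_Ropp, Rabs_R1]; lra.
Qed.

Lemma diag_indicator_not_equi_baire1 (B A : R -> Prop) :
  (forall G, G_delta_R G -> ~ countable_R G ->
     (exists p, G p /\ B p) /\ (exists p, G p /\ ~ B p)) ->
  G_delta_R A -> ~ meager_R A ->
  ~ equi_baire1 (fun p : R * R => A (fst p)) dist_R2 (fun _ => diag_indicator B).
Proof.
  intros HB HA HnM Heb.
  destruct (Heb 1) as [delta [Hpos Hdelta]]; [lra|].
  destruct (locally_constant_on_uncountable_G_delta A B (fun x => delta (x, x) / 2) HA HnM)
    as [G [HG [Hunc Hconst]]].
  - intros x Ax. specialize (Hpos (x, x) Ax). lra.
  - intros w z Aw Az Hwz. apply diag_indicator_close, (Hdelta (w, w) (z, z) Aw Az 0%nat).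
    pose proof (dist_R2_diag w z).
    pose proof (Rmin_l (delta (w, w) / 2) (delta (z, z) / 2)).
    pose proof (Rmin_r (delta (w, w) / 2) (delta (z, z) / 2)).
    apply Rmin_glb_lt; lra.
  - destruct (HB G HG Hunc) as [[p [Gp Bp]] [q [Gq Bq]]].
    apply Bq, (Hconst p q); auto.
Qed.

Theorem mainTheorem18 :
  exists B : R -> Prop, bernstein B /\
  exists f : nat -> R * R -> R,
    (forall n p, (B (fst p) /\ fst p = snd p -> f n p = 1) /\
                 (~ (B (fst p) /\ fst p = snd p) -> f n p = 0)) /\
    (forall x : R, equi_baire1 (fun _ => True) dist_R (fun n y => f n (x, y))) /\
    (forall y : R, equi_baire1 (fun _ => True) dist_R (fun n x => f n (x, y))) /\
    (forall A : R -> Prop, G_delta_R A -> ~ meager_R A ->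
       ~ equi_baire1 (fun p : R * R => A (fst p)) dist_R2 f).
Proof.
  destruct meets_and_misses_uncountable_G_delta as [B HB].
  exists B. split.
  { intros C Hcl Hunc. apply HB; auto. apply closed_G_delta, Hcl. }
  exists (fun _ => diag_indicator B). split; [|split; [|split]].
  - intros n p. unfold diag_indicator. destruct excluded_middle_informative; tauto.
  - intros x. apply (equi_baire1_single_support x). intros y Hy.
    apply diag_indicator_off_diag. auto.
  - intros y. apply (equi_baire1_single_support y (fun x => diag_indicator B (x, y))).
    intros x Hx. apply diag_indicator_off_diag, Hx.
  - intros A HA HnM. apply diag_indicator_not_equi_baire1; auto.
Qed.
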